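(* Let $\mathbb{K}$ be either $\mathbb{R}$ or $\mathbb{C}$, with all coefficients and solutions in $\mathbb{K}$. Let $D$ be a positive integer and $1\le D<q\le\infty$. For $k\in\{1,\dots,D\}$ let $\mathcal{D}_k=\{(d_1,\dots,d_k)\in\mathbb{N}^k: d_1+\cdots+d_k\le D\}$. Let $I$ be an infinite set. For all $i\in I$ and $d\in\{1,\dots,D\}$ let $\mathbf{a}_{i,d}=(a_{i,d,j})_{j=1}^\infty\in\ell^{q/(q-d)}$, $(\mathbf{a}_{i,d},\mathbf{x}^d)=\sum_{j=1}^\infty a_{i,d,j}x_j^d$, and \[ P_i(\mathbf{x})=\sum_{k=1}^D\sum_{(d_1,\dots,d_k)\in\mathcal{D}_k}(\mathbf{a}_{i,d_1},\mathbf{x}^{d_1})\cdots(\mathbf{a}_{i,d_k},\mathbf{x}^{d_k}). \] Let $\mathbf{b}=(b_i)_{i\in I}$ with $b_i\in\mathbb{K}$, and let $\mathbf{m}=(m_j)_{j=1}^\infty\in\ell^q$ with $m_j\ge 0$ for all $j\in\mathbb{N}$. If for every $\varepsilon>0$ and every finite subset $S$ of $I$ the finite set of inequalities $\{|P_i(\mathbf{x})-b_i|\le\varepsilon : i\in S\}$ has a solution $\mathbf{x}_{S,\varepsilon}=(x_{S,\varepsilon,j})_{j=1}^\infty\in\ell^q$ with $|x_{S,\varepsilon,j}|\le m_j$ for all $j\in\mathbb{N}$, then the infinite set of equations $\{P_i(\mathbf{x})=b_i : i\in I\}$ has an exact solution $\mathbf{x}=(x_j)_{j=1}^\infty\in\ell^q$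 with $|x_j|\le m_j$ for all $j\in\mathbb{N}$.
   Context: $\mathbb{N}=\{1,2,3,\dots\}$. For $q=\infty$ one sets $q/(q-d)=1$. $\ell^p$ ($1\le p<\infty$) denotes sequences with $\|\mathbf{a}\|_p=(\sum_j|a_j|^p)^{1/p}<\infty$, and $\ell^\infty$ bounded sequences with the sup norm; $\mathbf{x}^d=(x_j^d)_{j\ge1}$. For $\mathbf{x}\in\ell^q$ each series $(\mathbf{a}_{i,d},\mathbf{x}^d)$ converges absolutely by Hölder's inequality. $P_i$ is the multiplicative polynomial $\sum_{k}\sum_{\Delta\in\mathcal{D}_k}\sum_{J\in\mathbb{N}^k}a_{i,\Delta,J}x_J^\Delta$ with coefficients $a_{i,(d_1,\dots,d_k),(j_1,\dots,j_k)}=a_{i,d_1,j_1}\cdots a_{i,d_k,j_k}$. *)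

From mathcomp Require Import all_boot all_algebra.
From mathcomp Require Import all_classical all_reals all_analysis.
From mathcomp Require Import complex.
Import GRing.Theory Num.Theory numFieldNormedType.Exports.

Set Implicit Arguments.
Unset Strict Implicit.
Unset Printing Implicit Defensive.

Local Open Scope classical_set_scope.
Local Open Scope ring_scope.

Section Defs.
Variable R : realType.
Variable K : numFieldType.
Variable nrm : K -> R.

Definition in_lp (p : \bar R) (a : nat -> K) : Prop :=
  match p with
  | r%:E => cvg (series (fun j => nrm (a j) `^ r) @ \oo)
  | +oo%E => exists M : R, forall j, nrm (a j) <= M
  | -oo%E => False
  end.

Definition dual_exp (q : \bar R) (d : nat) : \bar R :=
  match q with
  | r%:E => (r / (r - d%:R))%:E
  | _ => 1%:E
  end.

Definition pairing (a x : nat -> K) (d : nat) : K :=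
  limn (series (fun j => a j * x j ^+ d)).

(* Encoding: k = k'.+1 with k' < D, d_l = (t l).+1 with
   t l : 'I_D (each d_l in {1..D}); D_k = tuples of positive integers with
   sum <= D (which forces each d_l <= D). *)
Definition Ppoly (D : nat) (a : nat -> nat -> K) (x : nat -> K) : K :=
  \sum_(k < D)
    \sum_(t : {ffun 'I_k.+1 -> 'I_D} | (\sum_(l < k.+1) (t l).+1 <= D)%N)
      \prod_(l < k.+1) pairing (a (t l).+1) x (t l).+1.

End Defs.

(* The statement of Theorem 5 for a given scalar field K with modulus nrm.
   Indices j in N = {1,2,...} are shifted to nat = {0,1,...}. *)
Definition theorem5_statement (R : realType) (K : numFieldType)
    (nrm : K -> R) : Prop :=
  forall (D : nat) (q : \bar R) (I : Type)
         (a : I -> nat -> nat -> K) (b : I -> K) (m : nat -> R),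
    (1 <= D)%N ->
    (D%:R%:E < q)%E ->
    infinite_set [set: I] ->
    (forall i d, (1 <= d <= D)%N -> in_lp nrm (dual_exp q d) (a i d)) ->
    in_lp (fun r : R => `|r|) q m ->
    (forall j, 0 <= m j) ->
    (forall eps : R, 0 < eps -> forall S : set I, finite_set S ->
       exists x : nat -> K,
         [/\ in_lp nrm q x, (forall j, nrm (x j) <= m j) &
             forall i, S i -> nrm (Ppoly D (a i) x - b i) <= eps]) ->
    exists x : nat -> K,
      [/\ in_lp nrm q x, (forall j, nrm (x j) <= m j) &
          forall i, Ppoly D (a i) x = b i].

From mathcomp Require Import all_boot all_algebra.
From mathcomp Require Import all_classical all_reals all_analysis.
From mathcomp Require Import complex.
From mathcomp Require Import ring lra.
Import order.Order.TTheory GRing.Theory Num.Theory numFieldNormedType.Exports.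
Import ArrowAsProduct.

(* Let B be the box |x_j| <= m_j. Young's inequality makes every weighted
   series sum_j |a_{i,d,j}| m_j^d converge, so on B the pairings (a_{i,d}, x^d),
   hence the P_i, are bounded and uniformly continuous for the product topology:
   finitely many coordinates control them up to any e. Parametrising B by a
   product of compact real intervals (real and imaginary parts in the complex
   case), Tychonoff's theorem gives a cluster point of the filter of approximate
   solution sets; it lies in B and solves every equation exactly, and it is in
   l^q because it is dominated by m. *)

Set Implicit Arguments.
Unset Strict Implicit.
Unset Printing Implicit Defensive.

Local Open Scope classical_set_scope.
Local Open Scope ring_scope.

Section RealFacts.
Variable R : realType.

(* With p = r/(r-d): a = (a^p)^(1/p), b^d = (b^r)^(d/r) and 1/p + d/r = 1,
   so a b^d <= max (a^p, b^r). *)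
Lemma mul_expn_le_powR (a b r : R) (d : nat) : 0 <= a -> 0 <= b -> d%:R < r ->
  a * b ^+ d <= a `^ (r / (r - d%:R)) + b `^ r.
Proof.
move=> a0 b0 dr.
have r0 : 0 < r by apply: le_lt_trans dr.
have rd0 : 0 < r - d%:R by rewrite subr_gt0.
set p := r / (r - d%:R); set M := Num.max (a `^ p) (b `^ r).
have M0 : 0 <= M by rewrite le_max powR_ge0.
have aM : a <= M `^ ((r - d%:R) / r).
  have -> : a = (a `^ p) `^ ((r - d%:R) / r).
    by rewrite -powRrM /p mulrA divfK ?gt_eqF // divff ?gt_eqF // powRr1.
  apply: ge0_ler_powR; rewrite ?nnegrE ?powR_ge0 // ?le_max ?lexx //.
  by rewrite divr_ge0 // ltW.
have bM : b ^+ d <= M `^ (d%:R / r).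
  have -> : b ^+ d = (b `^ r) `^ (d%:R / r).
    by rewrite -powRrM mulrCA divff ?gt_eqF // mulr1 powR_mulrn.
  apply: ge0_ler_powR; rewrite ?nnegrE ?powR_ge0 // ?le_max ?lexx ?orbT //.
  by rewrite divr_ge0 // ltW.
apply: (le_trans (ler_pM a0 (exprn_ge0 _ b0) aM bM)).
have e1 : (r - d%:R) / r + d%:R / r = 1 by rewrite -mulrDl subrK divff // gt_eqF.
rewrite -powRD e1 ?oner_eq0 // powRr1 //.
by rewrite ge_max lerDl lerDr !powR_ge0.
Qed.

Lemma nonneg_series_tail_le (w : nat -> R) N n : (forall j, 0 <= w j) ->
  cvgn (series w) -> \sum_(N <= j < n) w j <= limn (series w) - series w N.
Proof.
move=> w0 cw; have nd : nondecreasing_seq (series w) by exact: nondecreasing_series.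
have [Nn|nN] := leqP N n; last first.
  by rewrite big_geq ?subr_ge0 ?nondecreasing_cvgn_le // ltnW.
rewrite lerBrDl; apply: le_trans (nondecreasing_cvgn_le nd cw n).
by rewrite !seriesEnat /= -big_cat_nat.
Qed.

Lemma cvg_series_abs_tail (u : nat -> R) N B :
  (forall n, \sum_(N <= j < n) `|u j| <= B) -> cvgn (series u).
Proof.
move=> tailB; apply: normed_cvg; change (cvgn (series (fun j => `|u j|))).
have nd : nondecreasing_seq (series (fun j => `|u j|)).
  by apply: nondecreasing_series => j _ _.
apply: (nondecreasing_is_cvgn nd); exists (series (fun j => `|u j|) N + B) => _ [n _ <-].
have [Nn|nN] := leqP N n.
  by rewrite !seriesEnat /= (big_cat_nat (leq0n N) Nn) /= lerD2l.
have B0 : 0 <= B by have := tailB N; rewrite big_geq.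
by apply: le_trans (nd _ _ (ltnW nN)) _; rewrite lerDl.
Qed.

Lemma near_coord (z : nat -> R) n (e : R) : 0 < e -> \forall w \near z, `|w n - z n| < e.
Proof.
move=> e0; have ball_e : nbhs (z n) [set t : R | `|t - z n| < e].
  by rewrite -filter_from_norm_nbhs; exists e => // t /=; rewrite distrC.
exact: (@proj_continuous nat (fun _ => R) n z _ ball_e).
Qed.

Lemma box_compact (M : nat -> R) : compact [set z : nat -> R | forall n, `|z n| <= M n].
Proof.
have := @tychonoff nat (fun _ => R) (fun n => `[- M n, M n]%classic)
  (fun n => @segment_compact R _ _).
congr compact; apply/seteqP; split=> z /= zM n; have := zM n.
  by rewrite /= in_itv /= ler_norml.
by rewrite /= in_itv /= ler_norml.
Qed.

End RealFacts.

Section AbsoluteValue.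
Variables (R : realType) (K : numFieldType) (nrm : K -> R).
Variables (idx : nat -> nat) (phi : (nat -> R) -> nat -> K).
Hypothesis nrm_ge0 : forall x, 0 <= nrm x.
Hypothesis nrm0 : nrm 0 = 0.
Hypothesis nrm1 : nrm 1 = 1.
Hypothesis nrm_eq0 : forall x, nrm x = 0 -> x = 0.
Hypothesis nrmD : forall x y, nrm (x + y) <= nrm x + nrm y.
Hypothesis nrmM : forall x y, nrm (x * y) = nrm x * nrm y.
Hypothesis nrmN : forall x, nrm (- x) = nrm x.

Lemma nrm_sum (I : Type) (r : seq I) (P : pred I) (F : I -> K) :
  nrm (\sum_(i <- r | P i) F i) <= \sum_(i <- r | P i) nrm (F i).
Proof.
elim/big_ind2: _ => [|x1 x2 y1 y2 x12 y12|//]; first by rewrite nrm0.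
exact: le_trans (nrmD _ _) (lerD x12 y12).
Qed.

Lemma nrmX x n : nrm (x ^+ n) = nrm x ^+ n.
Proof. by elim: n => [|n IH]; rewrite ?expr0 ?nrm1 // !exprS nrmM IH. Qed.

Lemma nrm_distC x y : nrm (x - y) = nrm (y - x).
Proof. by rewrite -nrmN opprB. Qed.

Lemma nrm_le_approx (c : R) (v : K) :
  (forall e, 0 < e -> exists2 u, nrm u <= c + e & nrm (v - u) <= e) -> nrm v <= c.
Proof.
move=> approx; apply/ler_addgt0Pr => e e0.
have [u uc vu] := approx (e / 2) (divr_gt0 e0 (ltr0Sn _ 1)).
have := nrmD u (v - u); rewrite subrKC; lra.
Qed.

Lemma nrm_series_sub_le (u : nat -> K) N n B :
  (forall n, \sum_(N <= j < n) nrm (u j) <= B) -> (N <= n)%N ->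
  nrm (series u n - \sum_(j < N) u j) <= B.
Proof.
move=> tailB Nn; rewrite seriesEnat /= (big_cat_nat (leq0n N) Nn) /= big_mkord.
by rewrite addrAC subrr add0r; apply: le_trans (nrm_sum _ _ _) (tailB n).
Qed.

Lemma in_lp_le (q : \bar R) (x : nat -> K) (m : nat -> R) : (0 <= q)%E ->
  (forall j, nrm (x j) <= m j) -> in_lp (fun r : R => `|r|) q m -> in_lp nrm q x.
Proof.
case: q => [r| |] //= r0 xm.
- rewrite lee_fin in r0 => cm.
  apply: (@series_le_cvg _ _ (fun j => `|m j| `^ r)) => // j; rewrite ?powR_ge0 //.
  by apply: ge0_ler_powR; rewrite ?nnegrE // (le_trans (xm j) (ler_norm _)).
- by move=> [M HM]; exists M => j; apply: le_trans (xm j) (le_trans (ler_norm _) (HM j)).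
Qed.

Lemma cvg_series_mul_expn (q : \bar R) (d : nat) (a : nat -> K) (m : nat -> R) :
  (d%:R%:E < q)%E -> (forall j, 0 <= m j) ->
  in_lp nrm (dual_exp q d) a -> in_lp (fun r : R => `|r|) q m ->
  cvgn (series (fun j => nrm (a j) * m j ^+ d)).
Proof.
move=> dq m0; case: q dq => [r| |] //= dr.
- rewrite lte_fin in dr => ca cm.
  apply: (@series_le_cvg _ _ (fun j => nrm (a j) `^ (r / (r - d%:R)) + `|m j| `^ r)).
  + by move=> j; rewrite mulr_ge0 // exprn_ge0.
  + by move=> j; rewrite addr_ge0 // powR_ge0.
  + by move=> j; rewrite ger0_norm //; apply: mul_expn_le_powR.
  + exact: is_cvg_seriesD ca cm.
- move=> ca [M mM]; have M0 : 0 <= M by apply: le_trans (mM 0%N).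
  apply: (@series_le_cvg _ _ (fun j => M ^+ d * nrm (a j) `^ 1)).
  + by move=> j; rewrite mulr_ge0 // exprn_ge0.
  + by move=> j; rewrite mulr_ge0 ?exprn_ge0 // powR_ge0.
  + move=> j; rewrite powRr1 // mulrC; apply: ler_wpM2r => //.
    by apply: lerXn2r; rewrite ?nnegrE // (le_trans (ler_norm _) (mM j)).
  + exact: is_cvg_seriesZ ca.
Qed.

(* Completeness of K, in quantitative form. *)
Hypothesis nrm_series_tail : forall (u : nat -> K) N B,
  (forall n, \sum_(N <= j < n) nrm (u j) <= B) ->
  nrm (limn (series u) - \sum_(j < N) u j) <= B.

(* A chart of K^nat by real sequences, through which Tychonoff's theorem for
   real boxes reaches the box of K^nat. *)
Hypothesis phi_onto : forall x, exists2 z, phi z = x & forall n, `|z n| <= nrm (x (idx n)).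
Hypothesis phi_cont : forall z j e, 0 < e -> \forall w \near z, nrm (phi w j - phi z j) < e.

Section Box.
Variable m : nat -> R.
Hypothesis m_ge0 : forall j, 0 <= m j.

Definition in_box (x : nat -> K) := forall j, nrm (x j) <= m j.

Definition close_on (N : nat) (d : R) (x y : nat -> K) :=
  forall j, (j < N)%N -> nrm (x j - y j) < d.

Lemma close_onW N1 N2 d1 d2 x y : (N1 <= N2)%N -> d2 <= d1 ->
  close_on N2 d2 x y -> close_on N1 d1 x y.
Proof.
by move=> N12 d21 xy j jN; apply: lt_le_trans d21; apply: xy (leq_trans jN N12).
Qed.

Definition uniform_on_box (f : (nat -> K) -> K) :=
  (exists C, forall x, in_box x -> nrm (f x) <= C) /\
  forall e, 0 < e -> exists N, exists2 d, 0 < d &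
    forall x y, in_box x -> in_box y -> close_on N d x y -> nrm (f x - f y) <= e.

Lemma uniform_on_box_bound f : uniform_on_box f ->
  exists2 C, 0 < C & forall x, in_box x -> nrm (f x) <= C.
Proof.
move=> [[C fC] _]; exists (Num.max C 1); first by rewrite lt_max ltr01 orbT.
by move=> x Bx; rewrite le_max fC.
Qed.

Lemma uniform_on_box_cst c : uniform_on_box (fun=> c).
Proof.
split; first by exists (nrm c).
by move=> e e0; exists 0%N; exists 1 => // *; rewrite subrr nrm0 ltW.
Qed.

Lemma uniform_on_box_coord j : uniform_on_box (fun x => x j).
Proof.
split; first by exists (m j) => x; apply.
by move=> e e0; exists j.+1; exists e => // x y _ _ xy; apply/ltW/xy.
Qed.

Lemma uniform_on_box_add f g :
  uniform_on_box f -> uniform_on_box g -> uniform_on_box (fun x => f x + g x).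
Proof.
move=> [[Cf fC] Uf] [[Cg gC] Ug]; split.
  by exists (Cf + Cg) => x Bx; apply: le_trans (nrmD _ _) (lerD (fC x Bx) (gC x Bx)).
move=> e e0; have e2 : 0 < e / 2 by rewrite divr_gt0.
have [Nf [df df0 fd]] := Uf _ e2; have [Ng [dg dg0 gd]] := Ug _ e2.
exists (maxn Nf Ng); exists (Num.min df dg); first by rewrite lt_min df0 dg0.
move=> x y Bx By xy.
have xyf : close_on Nf df x y by apply: close_onW xy; rewrite ?leq_maxl // ge_min lexx.
have xyg : close_on Ng dg x y by apply: close_onW xy; rewrite ?leq_maxr // ge_min lexx orbT.
have -> : f x + g x - (f y + g y) = (f x - f y) + (g x - g y) by ring.
have := nrmD (f x - f y) (g x - g y).
have := fd x y Bx By xyf; have := gd x y Bx By xyg; lra.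
Qed.

Lemma uniform_on_box_mul f g :
  uniform_on_box f -> uniform_on_box g -> uniform_on_box (fun x => f x * g x).
Proof.
move=> Uf Ug; have [Cf Cf0 fC] := uniform_on_box_bound Uf.
have [Cg Cg0 gC] := uniform_on_box_bound Ug.
split.
  exists (Cf * Cg) => x Bx; rewrite nrmM.
  exact: ler_pM (nrm_ge0 _) (nrm_ge0 _) (fC x Bx) (gC x Bx).
move=> e e0; have e2 C : 0 < C -> 0 < e / 2 / C by move=> C0; rewrite !divr_gt0.
have [Nf [df df0 fd]] := Uf.2 _ (e2 _ Cg0); have [Ng [dg dg0 gd]] := Ug.2 _ (e2 _ Cf0).
exists (maxn Nf Ng); exists (Num.min df dg); first by rewrite lt_min df0 dg0.
move=> x y Bx By xy.
have xyf : close_on Nf df x y by apply: close_onW xy; rewrite ?leq_maxl // ge_min lexx.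
have xyg : close_on Ng dg x y by apply: close_onW xy; rewrite ?leq_maxr // ge_min lexx orbT.
have -> : f x * g x - f y * g y = f x * (g x - g y) + (f x - f y) * g y by ring.
apply: le_trans (nrmD _ _) _; rewrite !nrmM [e]splitr.
apply: lerD.
  apply: le_trans (ler_pM (nrm_ge0 _) (nrm_ge0 _) (fC x Bx) (gd x y Bx By xyg)) _.
  by rewrite mulrC divfK ?gt_eqF.
apply: le_trans (ler_pM (nrm_ge0 _) (nrm_ge0 _) (fd x y Bx By xyf) (gC y By)) _.
by rewrite divfK ?gt_eqF.
Qed.

Lemma uniform_on_box_sum (I : Type) (r : seq I) (P : pred I) (F : I -> (nat -> K) -> K) :
  (forall i, P i -> uniform_on_box (F i)) ->
  uniform_on_box (fun x => \sum_(i <- r | P i) F i x).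
Proof.
move=> UF; rewrite -fct_sumE; apply: big_ind => //; first exact: uniform_on_box_cst.
exact: uniform_on_box_add.
Qed.

Lemma uniform_on_box_prod (I : Type) (r : seq I) (P : pred I) (F : I -> (nat -> K) -> K) :
  (forall i, P i -> uniform_on_box (F i)) ->
  uniform_on_box (fun x => \prod_(i <- r | P i) F i x).
Proof.
move=> UF; rewrite -fct_prodE; apply: big_ind => //; first exact: uniform_on_box_cst.
exact: uniform_on_box_mul.
Qed.

Lemma uniform_on_box_expn f n :
  uniform_on_box f -> uniform_on_box (fun x => f x ^+ n).
Proof.
move=> Uf; have -> : (fun x => f x ^+ n) = fun x => \prod_(i < n) f x.
  by apply/funext => x; rewrite prodr_const card_ord.
exact: uniform_on_box_prod.
Qed.

Lemma uniform_on_box_approx f :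
  (forall e, 0 < e -> exists2 g, uniform_on_box g &
     forall x, in_box x -> nrm (f x - g x) <= e) ->
  uniform_on_box f.
Proof.
move=> approx; split.
  have [g [[C gC] _] fg] := approx 1 ltr01.
  exists (1 + C) => x Bx; have := nrmD (f x - g x) (g x); rewrite subrK.
  by have := fg x Bx; have := gC x Bx; lra.
move=> e e0; have e3 : 0 < e / 3 by rewrite divr_gt0.
have [g [_ Ug] fg] := approx _ e3; have [N [d d0 gd]] := Ug _ e3.
exists N; exists d => // x y Bx By xy.
have -> : f x - f y = (f x - g x) + ((g x - g y) - (f y - g y)) by ring.
have := nrmD (f x - g x) (g x - g y - (f y - g y)).
have := nrmD (g x - g y) (- (f y - g y)); rewrite nrmN.
have := fg x Bx; have := fg y By; have := gd x y Bx By xy; lra.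
Qed.

Lemma uniform_on_box_pairing (a : nat -> K) d :
  cvgn (series (fun j => nrm (a j) * m j ^+ d)) ->
  uniform_on_box (fun x => pairing a x d).
Proof.
set w := fun j => _ => cw; have w0 j : 0 <= w j by rewrite mulr_ge0 ?exprn_ge0.
apply: uniform_on_box_approx => e e0.
have [N _ wN] := (cvgrPdist_le _ _).1 cw e e0.
exists (fun x => \sum_(j < N) a j * x j ^+ d).
  apply: uniform_on_box_sum => j _; apply: uniform_on_box_mul.
    exact: uniform_on_box_cst.
  exact/uniform_on_box_expn/uniform_on_box_coord.
move=> x Bx; apply: nrm_series_tail => n.
apply: le_trans (_ : _ <= \sum_(N <= j < n) w j) _.
  apply: ler_sum => j _; rewrite nrmM nrmX ler_wpM2l //.
  by apply: lerXn2r; rewrite ?nnegrE.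
apply: le_trans (nonneg_series_tail_le N n w0 cw) _.
exact: le_trans (ler_norm _) (wN N (leqnn N)).
Qed.

Lemma uniform_on_box_Ppoly D (a : nat -> nat -> K) :
  (forall d, (0 < d <= D)%N -> cvgn (series (fun j => nrm (a d j) * m j ^+ d))) ->
  uniform_on_box (Ppoly D a).
Proof.
move=> cva; rewrite /Ppoly; apply: uniform_on_box_sum => k _.
apply: uniform_on_box_sum => t _; apply: uniform_on_box_prod => l _.
exact/uniform_on_box_pairing/cva/ltn_ord.
Qed.

Lemma near_phi_close z N d : 0 < d -> \forall w \near z, close_on N d (phi w) (phi z).
Proof.
move=> d0; have := @filter_forall _ 'I_N (fun j w => nrm (phi w j - phi z j) < d)
  (nbhs z) (nbhs_filter z) (fun j => phi_cont z j d0).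
by move=> /filterS; apply=> w wz j jN; exact: (wz (Ordinal jN)).
Qed.

Section Solution.
Variables (I : Type) (f : I -> (nat -> K) -> K).
Hypothesis f_approx : forall e, 0 < e -> forall S : set I, finite_set S ->
  exists2 x, in_box x & forall i, S i -> nrm (f i x) <= e.

Definition approx_solutions (p : set I * R) : set (nat -> R) :=
  [set z | (forall n, `|z n| <= m (idx n)) /\ in_box (phi z) /\
           forall i, p.1 i -> nrm (f i (phi z)) <= p.2].

Let approx_filter := filter_from [set p | finite_set p.1 /\ 0 < p.2] approx_solutions.

Lemma approx_filter_proper : ProperFilter approx_filter.
Proof.
apply: filter_from_proper; last first.
  move=> [S e] [/= fS e0]; have [x Bx Sx] := f_approx e0 fS.
  have [z zx xz] := phi_onto x; exists z; rewrite /approx_solutions /= zx.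
  by split=> [n|//]; apply: le_trans (xz n) (Bx _).
apply: filter_from_filter; first by exists (set0, 1); split=> //=; exact: finite_set0.
move=> [S1 e1] [S2 e2] [/= fS1 e10] [/= fS2 e20].
exists (S1 `|` S2, Num.min e1 e2).
  by split=> /=; [rewrite finite_setU | rewrite lt_min e10 e20].
move=> z [zB [Bz Sz]]; split; split=> //; split=> // i Si.
- by apply: le_trans (Sz i (or_introl Si)) _; rewrite ge_min lexx.
- by apply: le_trans (Sz i (or_intror Si)) _; rewrite ge_min lexx orbT.
Qed.

Lemma uniform_on_box_common_zero : (forall i, uniform_on_box (f i)) ->
  exists2 x, in_box x & forall i, f i x = 0.
Proof.
move=> f_uniform.
have box_in : approx_filter [set z | forall n, `|z n| <= m (idx n)].
  by exists (set0, 1); [split=> //=; exact: finite_set0 | move=> z []].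
have [z [_ z_cluster]] := box_compact approx_filter_proper box_in.
have near_sol S e N d : finite_set S -> 0 < e -> 0 < d -> exists w,
    [/\ in_box (phi w), forall i, S i -> nrm (f i (phi w)) <= e & close_on N d (phi w) (phi z)].
  move=> fS e0 d0.
  have Fe : approx_filter (approx_solutions (S, e)) by apply: in_filter_from.
  by have [w [[_ [Bw Sw]] wz]] := z_cluster _ _ Fe (near_phi_close z N d0); exists w.
have Bz : in_box (phi z).
  move=> j; apply: nrm_le_approx => e e0.
  have [w [Bw _ wz]] := near_sol set0 1 j.+1 e (finite_set0 I) ltr01 e0.
  exists (phi w j); first by rewrite (le_trans (Bw j)) // lerDl ltW.
  by rewrite nrm_distC ltW // wz.
exists (phi z) => // i; apply: nrm_eq0; apply/eqP; rewrite eq_le nrm_ge0 andbT.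
apply: nrm_le_approx => e e0; have [N [d d0 fd]] := (f_uniform i).2 e e0.
have [w [Bw Sw wz]] := near_sol [set i] e N d (finite_set1 i) e0 d0.
by exists (f i (phi w)); rewrite ?add0r ?Sw // nrm_distC fd.
Qed.

End Solution.
End Box.

Lemma theorem5_of_chart : theorem5_statement nrm.
Proof.
move=> D q I a b m _ Dq _ a_lp m_lp m_ge0 approx.
have Uf : forall i, uniform_on_box m (fun x => Ppoly D (a i) x - b i).
  move=> i; apply: uniform_on_box_add; last exact: uniform_on_box_cst.
  apply: uniform_on_box_Ppoly => // d dD.
  apply: cvg_series_mul_expn (a_lp i d dD) m_lp => //.
  by apply: le_lt_trans Dq; rewrite lee_fin ler_nat; case/andP: dD.
have [x Bx x0] : exists2 x, in_box m x & forall i, Ppoly D (a i) x - b i = 0.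
  apply: uniform_on_box_common_zero Uf => e e0 S fS.
  by have [x [_ Bx Sx]] := approx e e0 S fS; exists x.
exists x; split=> // [|i]; last by apply/eqP; rewrite -subr_eq0 x0.
by apply: in_lp_le Bx m_lp; apply: le_trans (ltW Dq); rewrite lee_fin.
Qed.

End AbsoluteValue.

Section RealCase.
Variable R : realType.

Lemma normr_series_tail (u : nat -> R) N B :
  (forall n, \sum_(N <= j < n) `|u j| <= B) -> `|limn (series u) - \sum_(j < N) u j| <= B.
Proof.
move=> tailB; have cu := cvg_series_abs_tail tailB.
apply: (@cvgr_to_le _ \oo _ _ (fun n => `|series u n - \sum_(j < N) u j|)).
  by apply: cvg_norm; apply: cvgB => //; exact: cvg_cst.
apply: filterS (nbhs_infty_ge N) => n /= Nn.
exact: (nrm_series_sub_le (normr0 _) (@ler_normD _ _) tailB Nn).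
Qed.

Lemma theorem5_real : theorem5_statement (fun r : R => `|r|).
Proof.
apply: (theorem5_of_chart (idx := id) (phi := id)).
- exact: normr_ge0.
- exact: normr0.
- exact: normr1.
- exact: normr0_eq0.
- exact: ler_normD.
- exact: normrM.
- exact: normrN.
- exact: normr_series_tail.
- by move=> x; exists x.
- exact: near_coord.
Qed.

End RealCase.

Section ComplexCase.
Variable R : realType.
Local Notation normc := (@Normc.normc R).
Local Open Scope complex_scope.
(* R[i] through its numFieldType structure, which carries its topology. *)
Local Notation C := (R[i] : numFieldType).

Lemma normc_Re (x : R[i]) : `|complex.Re x| <= normc x.
Proof.
by case: x => a b; rewrite /= -sqrtr_sqr ler_sqrt ?addr_ge0 ?sqr_ge0 // lerDl sqr_ge0.
Qed.

Lemma normc_Im (x : R[i]) : `|complex.Im x| <= normc x.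
Proof.
by case: x => a b; rewrite /= -sqrtr_sqr ler_sqrt ?addr_ge0 ?sqr_ge0 // lerDr sqr_ge0.
Qed.

Lemma sqrt_sqr_add_le (a b : R) : Num.sqrt (a ^+ 2 + b ^+ 2) <= `|a| + `|b|.
Proof.
rewrite -[X in _ <= X]ger0_norm ?addr_ge0 // -sqrtr_sqr ler_sqrt ?sqr_ge0 //.
rewrite -[a ^+ 2]real_normK ?num_real // -[b ^+ 2]real_normK ?num_real //.
by have := normr_ge0 a; have := normr_ge0 b; nra.
Qed.

Lemma Re_sum (I : Type) (r : seq I) (P : pred I) (F : I -> R[i]) :
  complex.Re (\sum_(i <- r | P i) F i) = \sum_(i <- r | P i) complex.Re (F i).
Proof. exact: (raddf_sum (@complex.Re R : Rcomplex R -> R)). Qed.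

Lemma Im_sum (I : Type) (r : seq I) (P : pred I) (F : I -> R[i]) :
  complex.Im (\sum_(i <- r | P i) F i) = \sum_(i <- r | P i) complex.Im (F i).
Proof. exact: (raddf_sum (@complex.Im R : Rcomplex R -> R)). Qed.

Lemma cvg_complex (u : nat -> C) (a b : R) :
  (fun n => complex.Re (u n)) @ \oo --> a -> (fun n => complex.Im (u n)) @ \oo --> b ->
  u @ \oo --> (a +i* b : C).
Proof.
move=> ua ub; apply/cvgrPdist_lt => e; rewrite ltcE /= => /andP[/eqP e_real e0].
have e2 : 0 < complex.Re e / 2 by rewrite divr_gt0.
have [N1 _ uaN] := (cvgrPdist_lt _ _).1 ua _ e2.
have [N2 _ ubN] := (cvgrPdist_lt _ _).1 ub _ e2.
exists (maxn N1 N2) => // n /= Nn.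
have := uaN n (leq_trans (leq_maxl _ _) Nn); have := ubN n (leq_trans (leq_maxr _ _) Nn).
rewrite normc_def ltcE /= e_real eqxx /=; case: (u n) => c d /= bd ac.
by apply: le_lt_trans (sqrt_sqr_add_le _ _) _; lra.
Qed.

Lemma normc_le_cvg (v : nat -> R[i]) (a b B : R) :
  (fun n => complex.Re (v n)) @ \oo --> a -> (fun n => complex.Im (v n)) @ \oo --> b ->
  (\forall n \near \oo, normc (v n) <= B) -> normc (a +i* b) <= B.
Proof.
move=> va vb vB; apply: (cvgr_to_le _ vB).
have -> : (fun n => normc (v n)) = Num.sqrt \o
    (fun n => complex.Re (v n) * complex.Re (v n) + complex.Im (v n) * complex.Im (v n)).
  by apply/funext => n; rewrite /comp; case: (v n) => c d /=; rewrite !expr2.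
rewrite /= ?expr2; apply: continuous_cvg; first exact: sqrt_continuous.
exact: cvgD (cvgM va va) (cvgM vb vb).
Qed.

Lemma normc_series_tail (u : nat -> C) N B :
  (forall n, \sum_(N <= j < n) normc (u j) <= B) ->
  normc (limn (series u) - \sum_(j < N) u j) <= B.
Proof.
move=> tailB; set ur := fun j => complex.Re (u j); set ui := fun j => complex.Im (u j).
have cvg_Re : cvgn (series ur).
  apply: (@cvg_series_abs_tail _ _ N B) => n; apply: le_trans (tailB n).
  by apply: ler_sum => j _; exact: normc_Re.
have cvg_Im : cvgn (series ui).
  apply: (@cvg_series_abs_tail _ _ N B) => n; apply: le_trans (tailB n).
  by apply: ler_sum => j _; exact: normc_Im.
have sRe : (fun n => complex.Re (series u n)) = series ur.
  by apply/funext => n; rewrite !seriesEnat /= Re_sum.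
have sIm : (fun n => complex.Im (series u n)) = series ui.
  by apply/funext => n; rewrite !seriesEnat /= Im_sum.
have cvg_u : series u @ \oo --> (limn (series ur) +i* limn (series ui) : C).
  by apply: cvg_complex; rewrite ?sRe ?sIm.
rewrite (norm_cvg_lim cvg_u).
set c := \sum_(j < N) u j.
have -> : limn (series ur) +i* limn (series ui) - c =
    (limn (series ur) - complex.Re c) +i* (limn (series ui) - complex.Im c) by case: c.
apply: (@normc_le_cvg (fun n => series u n - c)).
- have -> : (fun n => complex.Re (series u n - c)) = fun n => series ur n - complex.Re c.
    by apply/funext => n; rewrite (raddfB (@complex.Re R : Rcomplex R -> R)) -sRe.
  exact: cvgB cvg_Re (cvg_cst _).
- have -> : (fun n => complex.Im (series u n - c)) = fun n => series ui n - complex.Im c.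
    by apply/funext => n; rewrite (raddfB (@complex.Im R : Rcomplex R -> R)) -sIm.
  exact: cvgB cvg_Im (cvg_cst _).
- apply: filterS (nbhs_infty_ge N) => n /= Nn.
  exact: (nrm_series_sub_le (@Normc.normc0 R) (@le_normcD R) tailB Nn).
Qed.

Lemma theorem5_complex : theorem5_statement normc.
Proof.
apply: (theorem5_of_chart (idx := half) (phi := fun z j => z j.*2 +i* z j.*2.+1)).
- by case=> a b; exact: sqrtr_ge0.
- exact: Normc.normc0.
- exact: Normc.normc1.
- exact: Normc.eq0_normc.
- exact: le_normcD.
- exact: Normc.normcM.
- exact: normcN.
- exact: normc_series_tail.
- move=> x; exists (fun n => if odd n then complex.Im (x n./2) else complex.Re (x n./2)).
    by apply/funext => j /=; rewrite odd_double doubleK uphalf_double; case: (x j).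
  by move=> n; case: (odd n); [exact: normc_Im | exact: normc_Re].
- move=> z j e e0; have e2 : 0 < e / 2 by rewrite divr_gt0.
  have := @filterI _ (nbhs z) (nbhs_filter z) _ _
    (near_coord z j.*2 e2) (near_coord z j.*2.+1 e2).
  move=> /filterS; apply=> w [h1 h2] /=.
  by apply: le_lt_trans (sqrt_sqr_add_le _ _) _; lra.
Qed.

End ComplexCase.

Theorem theorem5 (R : realType) :
  @theorem5_statement R R (fun r : R => `|r|) /\
  @theorem5_statement R R[i] (@Normc.normc R).
Proof. by split; [exact: theorem5_real | exact: theorem5_complex]. Qed.
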